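(* Suppose $U_1,\dots,U_N,V_1,\dots,V_n\in\mathbb{R}^d$ form a margin-$m$, relative-bias-$0$ embedding of $S_{n,k}$ with $0<m<1$. Then for every $T\subset[n]$ with $k\le|T|\le\min\bigl(k+\frac{2km}{1-m},\,n-1\bigr)$ there exist $h\in\mathbb{S}^{d-1}$ and $c\in\mathbb{R}$ such that $\langle h,V_i\rangle\ge c$ for all $i\in T$ and $\langle h,V_j\rangle\le c$ for all $j\notin T$.
   Context: $S_{n,k}\in\{0,1\}^{\binom{n}{k}\times n}$ (so $N=\binom nk$) is the matrix whose rows are all the distinct vectors in $\{0,1\}^n$ with exactly $k$ ones, each appearing exactly once. For $A\in\{0,1\}^{N\times n}$ and $m\ge0$, unit vectors $U_1,\dots,U_N,V_1,\dots,V_n\in\mathbb{R}^d$ form a margin-$m$, relative-bias-$0$ embedding of $A$ if $\langle U_j,V_i\rangle\ge m$ whenever $A_{ji}=1$ and $\langle U_j,V_i\rangle\le -m$ whenever $A_{ji}=0$. *)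

From HB Require Import structures.
From mathcomp Require Import all_boot all_order all_algebra.
From mathcomp Require Import reals.
Set Implicit Arguments. Unset Strict Implicit. Unset Printing Implicit Defensive.
Import Order.TTheory GRing.Theory Num.Theory.
Local Open Scope ring_scope.

Definition dotv (R : realType) (d : nat) (u v : 'rV[R]_d) : R :=
  \sum_(i < d) u 0 i * v 0 i.

Definition unitv (R : realType) (d : nat) (u : 'rV[R]_d) : Prop :=
  dotv u u = 1.

(* The rows of S_{n,k} are indexed by the k-subsets A of [n] = 'I_n, each
   exactly once; the row for A has a 1 exactly in the columns i \in A.
   Thus U is given as a family indexed by subsets A with #|A| = k
   (its values on other subsets are irrelevant), and V by columns 'I_n. *)
Definition Snk_entry (n : nat) (A : {set 'I_n}) (i : 'I_n) : bool := i \in A.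

Definition margin_embedding_Snk (R : realType) (d n k : nat) (m : R)
    (U : {set 'I_n} -> 'rV[R]_d) (V : 'I_n -> 'rV[R]_d) : Prop :=
  (forall A : {set 'I_n}, #|A| = k -> unitv (U A)) /\
  (forall i : 'I_n, unitv (V i)) /\
  (forall (A : {set 'I_n}) (i : 'I_n), #|A| = k ->
     (Snk_entry A i -> m <= dotv (U A) (V i)) /\
     (~~ Snk_entry A i -> dotv (U A) (V i) <= - m)).

(** Sum the vectors U_A over all k-subsets A of T.  For j outside T every
    summand has inner product at most -m with V_j.  For i in T, a fraction
    k/|T| of the summands contain i and contribute at least m, the others
    at least -1 by Cauchy-Schwarz; the bound on |T| is exactly what makes this
    average at least -m as well.  Hence the normalized sum and the threshold
    -m C(|T|, k) (rescaled) separate T from its complement. *)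
From HB Require Import structures.
From mathcomp Require Import all_boot all_order all_algebra.
From mathcomp Require Import reals.
From mathcomp Require Import ring lra.
Set Implicit Arguments. Unset Strict Implicit. Unset Printing Implicit Defensive.
Import Order.TTheory GRing.Theory Num.Theory.
Local Open Scope ring_scope.

Section InnerProduct.

Variables (R : realType) (d : nat).
Implicit Types (u v : 'rV[R]_d) (a : R).

Lemma dotv_suml (I : finType) (P : pred I) (F : I -> 'rV[R]_d) v :
  dotv (\sum_(x | P x) F x) v = \sum_(x | P x) dotv (F x) v.
Proof.
rewrite /dotv; under eq_bigr do rewrite summxE big_distrl.
by rewrite exchange_big.
Qed.

Lemma dotvZl a u v : dotv (a *: u) v = a * dotv u v.
Proof. by rewrite /dotv mulr_sumr; apply: eq_bigr => l _; rewrite mxE mulrA. Qed.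

Lemma dotvZr a u v : dotv u (a *: v) = a * dotv u v.
Proof. by rewrite /dotv mulr_sumr; apply: eq_bigr => l _; rewrite mxE; ring. Qed.

Lemma dotv0l v : dotv 0 v = 0.
Proof. by rewrite /dotv big1 // => l _; rewrite mxE mul0r. Qed.

Lemma dotvv_ge0 u : 0 <= dotv u u.
Proof. by apply: sumr_ge0 => l _; rewrite -expr2 sqr_ge0. Qed.

Lemma dotvv_eq0 u : (dotv u u == 0) = (u == 0).
Proof.
apply/eqP/eqP => [uu0 | ->]; last exact: dotv0l.
apply/rowP => l; rewrite mxE; apply/eqP; rewrite -sqrf_eq0 expr2.
by apply/eqP; apply: (psumr_eq0P _ uu0) => // l' _; rewrite -expr2 sqr_ge0.
Qed.

Lemma unitv_normalize u : u != 0 -> unitv ((Num.sqrt (dotv u u))^-1 *: u).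
Proof.
rewrite -dotvv_eq0 => uu0; have uu_gt0 : 0 < dotv u u by rewrite lt_def uu0 dotvv_ge0.
rewrite /unitv dotvZl dotvZr mulrA -expr2 exprVn sqr_sqrtr ?mulVf //.
exact: ltW.
Qed.

Lemma unitv_dotv_geN1 u v : unitv u -> unitv v -> -1 <= dotv u v.
Proof.
rewrite /unitv => uu1 vv1.
have : 0 <= dotv (u + v) (u + v) := dotvv_ge0 (u + v).
have -> : dotv (u + v) (u + v) = dotv u u + dotv v v + 2 * dotv u v.
  rewrite /dotv mulr_sumr -!big_split /=; apply: eq_bigr => l _; rewrite !mxE; ring.
rewrite uu1 vv1; lra.
Qed.

End InnerProduct.

Definition separates (R : realType) (d : nat) (I : finType)
    (V : I -> 'rV[R]_d) (T : {set I}) (h : 'rV[R]_d) (c : R) : Prop :=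
  (forall i, i \in T -> c <= dotv h (V i)) /\
  (forall j, j \notin T -> dotv h (V j) <= c).

Lemma separatesZ (R : realType) (d : nat) (I : finType) (V : I -> 'rV[R]_d)
    (T : {set I}) (h : 'rV[R]_d) (c a : R) :
  0 <= a -> separates V T h c -> separates V T (a *: h) (a * c).
Proof.
move=> a_ge0 [sepT sepTc]; split=> i iT; rewrite dotvZl.
  exact: ler_wpM2l (sepT i iT).
exact: ler_wpM2l (sepTc i iT).
Qed.

Lemma separates_normalize (R : realType) (d : nat) (I : finType)
    (V : I -> 'rV[R]_d) (T : {set I}) (g : 'rV[R]_d) (c : R) (j0 : I) :
  separates V T g c -> j0 \notin T -> c < 0 ->
  exists h c', unitv h /\ separates V T h c'.
Proof.
move=> sep j0T c_lt0.
have g_neq0 : g != 0.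
  apply: contraTneq c_lt0 => g0; rewrite -leNgt.
  by have := sep.2 j0 j0T; rewrite g0 dotv0l.
exists ((Num.sqrt (dotv g g))^-1 *: g), ((Num.sqrt (dotv g g))^-1 * c).
split; first exact: unitv_normalize.
by apply: separatesZ => //; rewrite invr_ge0 sqrtr_ge0.
Qed.

Definition draws (I : finType) (B : {set I}) (k : nat) : {set {set I}} :=
  [set A : {set I} | A \subset B & #|A| == k].

Lemma card_in_draws (I : finType) (B A : {set I}) (k : nat) :
  A \in draws B k -> #|A| = k.
Proof. by rewrite inE => /andP[_ /eqP]. Qed.

Lemma card_draws_notin (I : finType) (B : {set I}) (i : I) (k : nat) :
  i \in B -> #|draws B k :\: [set A : {set I} | i \in A]| = 'C(#|B|.-1, k).
Proof.
move=> iB; rewrite (cardsD1 i B) iB -cards_draws; apply: eq_card => A.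
by rewrite !inE subsetD1; case: (i \in A); rewrite ?andbF ?andbT.
Qed.

Lemma card_draws_mem (I : finType) (B : {set I}) (i : I) (k : nat) :
  i \in B ->
  (#|B| * #|draws B k :&: [set A : {set I} | i \in A]| = k * 'C(#|B|, k))%N.
Proof.
move=> iB; have [kB | Bk] := leqP k #|B|; last first.
  have : #|draws B k| == 0 by rewrite cards_draws bin_small.
  by rewrite cards_eq0 => /eqP ->; rewrite set0I cards0 bin_small // !muln0.
have splitM := cardsID [set A : {set I} | i \in A] (draws B k).
apply/(@addIn ((#|B| - k) * 'C(#|B|, k))%N).
rewrite -{1}mul_bin_down -(card_draws_notin k iB) -mulnDr splitM.
by rewrite cards_draws -mulnDl subnKC.
Qed.

Lemma margin_average_bound (R : realFieldType) (m t k M n1 : R) :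
  0 < t -> 0 <= M -> t * n1 = k * M -> (1 - m) * t <= (1 + m) * k ->
  - (m * M) <= m * n1 - (M - n1).
Proof.
move=> t_gt0 M_ge0 tn1 tk; rewrite -subr_ge0 -(pmulr_rge0 _ t_gt0).
have -> : t * (m * n1 - (M - n1) - - (m * M)) = M * ((1 + m) * k - (1 - m) * t).
  transitivity ((1 + m) * (t * n1) - (1 - m) * t * M); first ring.
  by rewrite tn1; ring.
by apply: mulr_ge0 => //; rewrite subr_ge0.
Qed.

Lemma margin_size_bound (R : realFieldType) (m t k : R) :
  m < 1 -> t <= k + 2 * k * m / (1 - m) -> (1 - m) * t <= (1 + m) * k.
Proof.
rewrite -subr_gt0 => m_lt1; rewrite -(ler_pM2l m_lt1) mulrDr mulrCA divff ?gt_eqF //.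
by move/le_trans; apply; rewrite le_eqVlt; apply/orP; left; apply/eqP; ring.
Qed.

Section SumOverDraws.

Variables (R : realType) (d n k : nat) (m : R).
Variables (U : {set 'I_n} -> 'rV[R]_d) (V : 'I_n -> 'rV[R]_d).
Hypothesis emb : margin_embedding_Snk k m U V.
Variable T : {set 'I_n}.

Let hT := \sum_(A in draws T k) U A.
Let M : R := 'C(#|T|, k)%:R.

Lemma dotv_sum_draws_notin j : j \notin T -> dotv hT (V j) <= - (m * M).
Proof.
move=> jT; have [_ [_ UV]] := emb.
rewrite dotv_suml /M -mulNr -(cards_draws T k) mulr_natr -sumr_const.
apply: ler_sum => A AT; apply: (UV A j (card_in_draws AT)).2.
by apply: contra jT; move: AT; rewrite inE => /andP[/subsetP AT _] /AT.
Qed.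

Lemma dotv_sum_draws_mem i : i \in T ->
  (1 - m) * #|T|%:R <= (1 + m) * k%:R -> - (m * M) <= dotv hT (V i).
Proof.
move=> iT Tbound; have [Uunit [Vunit UV]] := emb.
set S := [set A : {set 'I_n} | i \in A].
rewrite dotv_suml.
apply: (@le_trans _ _ (\sum_(A in draws T k) (if i \in A then m else -1))); last first.
  apply: ler_sum => A AT; case: ifP => iA; first exact: (UV A i (card_in_draws AT)).1.
  exact: unitv_dotv_geN1 (Uunit _ (card_in_draws AT)) (Vunit i).
rewrite (big_setID S) /= (eq_bigr (fun=> m)); last by move=> A; rewrite !inE => /andP[_ ->].
rewrite [X in _ + X](eq_bigr (fun=> -1)); last first.
  by move=> A; rewrite !inE => /andP[/negbTE ->].
rewrite !sumr_const -mulr_natr mulNrn.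
have -> : #|draws T k :\: S|%:R = M - #|draws T k :&: S|%:R.
  by rewrite /M -(cards_draws T k) -(cardsID S) natrD addrAC subrr add0r.
apply: (margin_average_bound (t := #|T|%:R) (k := k%:R)) => //.
- by rewrite ltr0n card_gt0; apply/set0Pn; exists i.
- by rewrite -natrM card_draws_mem // natrM.
Qed.

Lemma sum_draws_separates : (1 - m) * #|T|%:R <= (1 + m) * k%:R ->
  separates V T hT (- (m * M)).
Proof.
by move=> Tbound; split=> [i iT | j jT];
  [exact: dotv_sum_draws_mem | exact: dotv_sum_draws_notin].
Qed.

End SumOverDraws.

Theorem propositionG1 (R : realType) (d n k : nat) (m : R)
    (U : {set 'I_n} -> 'rV[R]_d) (V : 'I_n -> 'rV[R]_d) :
  margin_embedding_Snk k m U V ->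
  0 < m < 1 ->
  forall T : {set 'I_n},
    (k <= #|T|)%N ->
    (#|T|%:R <= k%:R + 2 * k%:R * m / (1 - m) :> R) ->
    (#|T| <= n - 1)%N ->
    exists (h : 'rV[R]_d) (c : R),
      unitv h /\
      (forall i : 'I_n, i \in T -> c <= dotv h (V i)) /\
      (forall j : 'I_n, j \notin T -> dotv h (V j) <= c).
Proof.
move=> emb /andP[m_gt0 m_lt1] T kT Tbound _.
suff [h [c [h_unit sep]]] : exists h c, unitv h /\ separates V T h c.
  by exists h, c.
have [j0 j0T | T_full] := pickP [pred j | j \notin T].
  apply: separates_normalize j0T _.
    exact/(sum_draws_separates emb)/margin_size_bound.
  by rewrite oppr_lt0 mulr_gt0 // ltr0n bin_gt0.
(* T is all of 'I_n, and any unit vector separates with threshold -1. *)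
have [Uunit [Vunit _]] := emb.
have /set0Pn [A0 A0T] : draws T k != set0 by rewrite -card_gt0 cards_draws bin_gt0.
exists (U A0), (-1); split; first exact: Uunit (card_in_draws A0T).
split=> [i _ | j jT]; first exact: unitv_dotv_geN1 (Uunit _ (card_in_draws A0T)) _.
by have := T_full j; rewrite /= jT.
Qed.
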